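(* Let $S$ be a $0$-cancellative semigroup admitting least common multiples. For $i=1,2$ let $\Lambda_i\subseteq\tilde S$ be finite with $\Lambda_i\cap S\neq\emptyset$, and let $u_i,v_i\in\Lambda_i$, such that $$\theta_{u_1}f_{\Lambda_1}\theta_{v_1}^{-1}=\theta_{u_2}f_{\Lambda_2}\theta_{v_2}^{-1}\neq0.$$ Then there are $x_1,x_2\in\tilde S$ such that (i) $\theta_{u_i}f_{\Lambda_i}\theta_{v_i}^{-1}=\theta_{u_ix_i}f_{\Lambda_ix_i}\theta_{v_ix_i}^{-1}$ for $i=1,2$; (ii) $u_1x_1=u_2x_2$ and $F_{\Lambda_1x_1}=F_{\Lambda_2x_2}$; and moreover at least one of the following holds: (a) $v_1x_1=v_2x_2$; (b) $v_1x_1$ is an idempotent element of $S$, $\theta_{v_1x_1}\geq f_{\Lambda_1x_1}$, and $v_2=x_2=1$; (c) the same as (b) with the indices $1$ and $2$ interchanged.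
   Context: $S$ has zero $0$, $S'=S\setminus\{0\}$; $0$-cancellative means $st=sr\neq0\Rightarrow t=r$ and $ts=rs\neq0\Rightarrow t=r$. $\tilde S=S\cup\{1\}$, $1\notin S$ an adjoined identity; $s\mid t$ means $t\in s\tilde S$; $r$ is a least common multiple of $s,t$ if $sS\cap tS=rS$, $s\mid r$, $t\mid r$; $S$ admits least common multiples if every pair has one. For $s\in S$: $F_s=\{x\in S':sx\neq0\}$, $\theta_s:F_s\to sS\setminus\{0\}$, $x\mapsto sx$, a partial bijection of $S'$; $\theta_1=\mathrm{id}_{S'}$, $F_1=S'$. For finite $\Lambda\subseteq\tilde S$, $F_\Lambda=\bigcap_{w\in\Lambda}F_w$ and $f_\Lambda=\mathrm{id}_{F_\Lambda}$; $\Lambda x=\{\lambda x:\lambda\in\Lambda\}$. Products are compositions of partial bijections; $0$ denotes the empty map; $\geq$ is the natural order (for partial bijections, $g\geq h$ iff $h$ is a restriction of $g$). *)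

(* A semigroup with zero is given by a carrier T, a zero z and
   a multiplication mul; the adjoined identity of S~ = S ∪ {1} is encoded by
   option T, with None standing for 1 and Some s for s ∈ S. *)
From Stdlib Require Import List.
Import ListNotations.
Set Implicit Arguments.

Section SG.
Variables (T : Type) (z : T) (mul : T -> T -> T).

Definition tmul (a b : option T) : option T :=
  match a, b with
  | None, _ => b
  | _, None => a
  | Some s, Some t => Some (mul s t)
  end.

Definition act (w : option T) (x : T) : T :=
  match w with None => x | Some s => mul s x end.

Definition is_semigroup_with_zero : Prop :=
  (forall a b c, mul (mul a b) c = mul a (mul b c)) /\
  (forall a, mul z a = z) /\ (forall a, mul a z = z).

Definition zero_cancellative : Prop :=
  (forall s t r, mul s t = mul s r -> mul s t <> z -> t = r) /\
  (forall s t r, mul t s = mul r s -> mul t s <> z -> t = r).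

Definition sdivides (s t : T) : Prop := exists a : option T, Some t = tmul (Some s) a.

Definition is_lcm (s t r : T) : Prop :=
  (forall w, ((exists a, w = mul s a) /\ (exists b, w = mul t b)) <->
             (exists c, w = mul r c)) /\
  sdivides s r /\ sdivides t r.

Definition admits_lcm : Prop := forall s t, exists r, is_lcm s t r.

(* partial maps on S' represented by their graphs *)
Definition pmap := T -> T -> Prop.

Definition pcomp (g h : pmap) : pmap := fun x y => exists m, h x m /\ g m y.
Definition pinv (g : pmap) : pmap := fun x y => g y x.
Definition peq (g h : pmap) : Prop := forall x y, g x y <-> h x y.
Definition pnonzero (g : pmap) : Prop := exists x y, g x y.
Definition pge (g h : pmap) : Prop := forall x y, h x y -> g x y.

Definition Fdom (w : option T) (x : T) : Prop := x <> z /\ act w x <> z.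

Definition theta (w : option T) : pmap := fun x y => Fdom w x /\ y = act w x.

Definition FL (L : list (option T)) (x : T) : Prop :=
  x <> z /\ forall w, In w L -> Fdom w x.

Definition fL (L : list (option T)) : pmap := fun x y => FL L x /\ y = x.

Definition Lmul (L : list (option T)) (x : option T) : list (option T) :=
  map (fun l => tmul l x) L.

Definition tft (u : option T) (L : list (option T)) (v : option T) : pmap :=
  pcomp (theta u) (pcomp (fL L) (pinv (theta v))).

End SG.

(* Write g_i = θ_{u_i} f_{Λ_i} θ_{v_i}^{-1}; its graph is {(v_i m, u_i m) : m ∈ F_{Λ_i}}.
   Equality of the g_i gives u_1 F_{Λ_1} = u_2 F_{Λ_2}, so both sets lie in
   u_1 S ∩ u_2 S = r S for r = lcm(u_1, u_2) = u_i x_i, and 0-cancellativity puts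
   F_{Λ_i} inside x_i S.  Hence g_i is unchanged when Λ_i, u_i, v_i are multiplied on
   the right by x_i, and afterwards the two maps share the left factor u_1 x_1 = u_2 x_2.
   Cancelling it shows that the domains agree and v_1 x_1 m = v_2 x_2 m on F_{Λ_1 x_1}.
   Right cancellation then forces v_1 x_1 = v_2 x_2 unless one side is 1, in which case
   the other side fixes F_{Λ x} pointwise and is therefore idempotent. *)
From Stdlib Require Import List.

Set Implicit Arguments.
Unset Strict Implicit.

Section ZeroSemigroup.
Variables (T : Type) (z : T) (mul : T -> T -> T).
Hypothesis HS : is_semigroup_with_zero z mul.
Hypothesis Hcanc : zero_cancellative z mul.

Lemma act_tmul a b m : act mul (tmul mul a b) m = act mul a (act mul b m).
Proof. destruct HS as [Hassoc _]. destruct a, b; simpl; auto. Qed.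

Lemma act_zero a : act mul a z = z.
Proof. destruct a; simpl; [apply (proj2 (proj2 HS)) | reflexivity]. Qed.

Lemma tmul_eq_None a b : tmul mul a b = None -> a = None /\ b = None.
Proof. destruct a, b; simpl; try discriminate; auto. Qed.

Lemma act_inj u m m' : act mul u m = act mul u m' -> act mul u m <> z -> m = m'.
Proof. destruct u; simpl; auto. apply (proj1 Hcanc). Qed.

Lemma idempotent_of_fixed a m : mul a m = m -> m <> z -> mul a a = a.
Proof.
  intros Hfix Hm. destruct HS as [Hassoc _].
  assert (E : mul (mul a a) m = mul a m) by (rewrite Hassoc, !Hfix; reflexivity).
  apply (proj2 Hcanc m _ _ E). rewrite E, Hfix. exact Hm.
Qed.

Lemma FL_act_nonzero L w m : FL z mul L m -> In w L -> act mul w m <> z.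
Proof. intros HF Hw. exact (proj2 (proj2 HF w Hw)). Qed.

Lemma in_Lmul L w x : In w L -> In (tmul mul w x) (Lmul mul L x).
Proof. apply (in_map (fun l => tmul mul l x)). Qed.

Lemma tft_iff u L v p q : In u L -> In v L ->
  tft z mul u L v p q <->
  exists m, FL z mul L m /\ p = act mul v m /\ q = act mul u m.
Proof.
  intros Hu Hv. unfold tft, pcomp, pinv, theta, fL. split.
  - intros [m1 [[m [[_ Hp] [HF Hm]]] [_ Hq]]]. subst. eauto.
  - intros [m [HF [Hp Hq]]]. exists m. split.
    + exists m. split; [split; [exact (proj2 HF v Hv) | exact Hp] | split; auto].
    + split; [exact (proj2 HF u Hu) | exact Hq].
Qed.

(* An element λ ∈ Λ ∩ S is needed: it makes x m ≠ 0 whenever m ∈ F_{Λx}. *)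
Lemma FL_Lmul L x m s : In (Some s) L ->
  FL z mul (Lmul mul L x) m <-> m <> z /\ FL z mul L (act mul x m).
Proof.
  intros Hs. unfold FL, Fdom, Lmul. split.
  - intros [Hm H].
    assert (Hx : act mul x m <> z).
    { intro E. destruct (H (tmul mul (Some s) x)) as [_ Hsx]; [exact (in_Lmul x Hs) |].
      rewrite act_tmul, E, act_zero in Hsx. auto. }
    split; [exact Hm |]. split; [exact Hx |].
    intros w Hw. destruct (H (tmul mul w x)) as [_ Hwx]; [exact (in_Lmul x Hw) |].
    split; [exact Hx | rewrite act_tmul in Hwx; exact Hwx].
  - intros [Hm [_ H]]. split; [exact Hm |].
    intros w' Hw'. apply in_map_iff in Hw'. destruct Hw' as [w [<- Hw]].
    split; [exact Hm | rewrite act_tmul; exact (proj2 (H w Hw))].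
Qed.

Definition FL_in_range (L : list (option T)) (x : option T) : Prop :=
  forall m, FL z mul L m -> exists c, m = act mul x c.

Lemma tft_Lmul u L v x s : In (Some s) L -> In u L -> In v L -> FL_in_range L x ->
  peq (tft z mul u L v) (tft z mul (tmul mul u x) (Lmul mul L x) (tmul mul v x)).
Proof.
  intros Hs Hu Hv Hx p q.
  rewrite (tft_iff p q Hu Hv), (tft_iff p q (in_Lmul x Hu) (in_Lmul x Hv)).
  split.
  - intros [m [HF [Hp Hq]]]. destruct (Hx m HF) as [c Hc]. exists c.
    assert (Hcz : c <> z).
    { intro E. subst c. rewrite act_zero in Hc. subst m. exact (proj1 HF eq_refl). }
    rewrite (FL_Lmul x c Hs), !act_tmul, <- Hc. auto.
  - intros [c [HF [Hp Hq]]]. apply (FL_Lmul x c Hs) in HF.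
    exists (act mul x c). rewrite act_tmul in Hp, Hq. tauto.
Qed.

Lemma tft_peq_transfer u1 L1 v1 u2 L2 v2 m :
  In u1 L1 -> In v1 L1 -> In u2 L2 -> In v2 L2 ->
  peq (tft z mul u1 L1 v1) (tft z mul u2 L2 v2) -> FL z mul L1 m ->
  exists m', FL z mul L2 m' /\ act mul v1 m = act mul v2 m' /\
             act mul u1 m = act mul u2 m'.
Proof.
  intros Hu1 Hv1 Hu2 Hv2 Heq Hm.
  assert (H : tft z mul u1 L1 v1 (act mul v1 m) (act mul u1 m))
    by (apply (tft_iff _ _ Hu1 Hv1); eauto).
  apply Heq, (tft_iff _ _ Hu2 Hv2) in H. exact H.
Qed.

Lemma peq_sym (g h : pmap T) : peq g h -> peq h g.
Proof. intros H p q. apply iff_sym, H. Qed.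

Lemma tft_peq_left_cover u1 L1 v1 u2 L2 v2 :
  In u1 L1 -> In v1 L1 -> In u2 L2 -> In v2 L2 ->
  peq (tft z mul u1 L1 v1) (tft z mul u2 L2 v2) ->
  forall m, FL z mul L1 m ->
  act mul u1 m <> z /\ exists m', act mul u1 m = act mul u2 m'.
Proof.
  intros Hu1 Hv1 Hu2 Hv2 Heq m Hm. split; [exact (FL_act_nonzero Hm Hu1) |].
  destruct (tft_peq_transfer Hu1 Hv1 Hu2 Hv2 Heq Hm) as [m' [_ [_ E]]]. eauto.
Qed.

Lemma tft_peq_same_left U M1 V1 M2 V2 :
  In U M1 -> In V1 M1 -> In U M2 -> In V2 M2 ->
  peq (tft z mul U M1 V1) (tft z mul U M2 V2) ->
  forall m, FL z mul M1 m -> FL z mul M2 m /\ act mul V1 m = act mul V2 m.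
Proof.
  intros HU1 HV1 HU2 HV2 Heq m Hm.
  destruct (tft_peq_transfer HU1 HV1 HU2 HV2 Heq Hm) as [m' [Hm' [Hv Hu]]].
  assert (m = m') by exact (act_inj Hu (FL_act_nonzero Hm HU1)).
  subst m'. auto.
Qed.

Lemma divisor_cofactor t r x m : Some r = tmul mul (Some t) x -> mul t m <> z ->
  (exists c, mul t m = mul r c) -> exists c, m = act mul x c.
Proof.
  intros Hx Hnz [c Ec]. exists c. apply (proj1 Hcanc t _ _); [| exact Hnz].
  rewrite Ec. change (act mul (Some r) c = act mul (Some t) (act mul x c)).
  rewrite Hx. apply act_tmul.
Qed.

Lemma right_multiples_cover (Hlcm : admits_lcm mul) (P1 P2 : T -> Prop) u1 u2 :
  (forall m, P1 m -> act mul u1 m <> z /\ exists m', act mul u1 m = act mul u2 m') ->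
  (forall m, P2 m -> act mul u2 m <> z /\ exists m', act mul u2 m = act mul u1 m') ->
  exists x1 x2, tmul mul u1 x1 = tmul mul u2 x2 /\
    (forall m, P1 m -> exists c, m = act mul x1 c) /\
    (forall m, P2 m -> exists c, m = act mul x2 c).
Proof.
  intros R1 R2. destruct u1 as [t1|], u2 as [t2|].
  - destruct (Hlcm t1 t2) as [r [Hr [[a Ha] [b Hb]]]].
    exists a, b. split; [rewrite <- Ha, <- Hb; reflexivity |]. split.
    + intros m Hm. destruct (R1 m Hm) as [Hnz [m' E]]. simpl in Hnz, E.
      apply (divisor_cofactor Ha Hnz), Hr. eauto.
    + intros m Hm. destruct (R2 m Hm) as [Hnz [m' E]]. simpl in Hnz, E.
      apply (divisor_cofactor Hb Hnz), Hr. eauto.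
  - exists None, (Some t1). split; [reflexivity |].
    split; [intros m _; exists m; reflexivity |].
    intros m Hm. destruct (R2 m Hm) as [_ [m' E]]. exists m'. exact E.
  - exists (Some t2), None. split; [reflexivity |].
    split; [| intros m _; exists m; reflexivity].
    intros m Hm. destruct (R1 m Hm) as [_ [m' E]]. exists m'. exact E.
  - exists None, None. split; [reflexivity |]. split; intros m _; exists m; reflexivity.
Qed.

Lemma fixing_element_idempotent a M : (exists m0, FL z mul M m0) ->
  (forall m, FL z mul M m -> mul a m = m) ->
  (exists e, Some a = Some e /\ mul e e = e) /\ pge (theta z mul (Some a)) (fL z mul M).
Proof.
  intros [m0 H0] Hfix. split.
  - exists a. split; [reflexivity |]. exact (idempotent_of_fixed (Hfix m0 H0) (proj1 H0)).
  - intros p q [Hp ->]. unfold theta, Fdom. simpl. rewrite (Hfix p Hp).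
    split; [split |]; [exact (proj1 Hp) | exact (proj1 Hp) | reflexivity].
Qed.

Lemma right_factor_cases M1 M2 V1 V2 :
  In V1 M1 -> In V2 M2 -> (forall m, FL z mul M1 m <-> FL z mul M2 m) ->
  (exists m0, FL z mul M1 m0) ->
  (forall m, FL z mul M1 m -> act mul V1 m = act mul V2 m) ->
  V1 = V2
  \/ ((exists e, V1 = Some e /\ mul e e = e) /\ pge (theta z mul V1) (fL z mul M1) /\
      V2 = None)
  \/ ((exists e, V2 = Some e /\ mul e e = e) /\ pge (theta z mul V2) (fL z mul M2) /\
      V1 = None).
Proof.
  intros HV1 HV2 HF [m0 H0] Hact.
  destruct V1 as [a|], V2 as [b|].
  - left. f_equal. apply (proj2 Hcanc m0 a b (Hact m0 H0)).
    exact (FL_act_nonzero H0 HV1).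
  - right; left. destruct (@fixing_element_idempotent a M1) as [Ha Hge]; eauto.
  - right; right. destruct (@fixing_element_idempotent b M2) as [Hb Hge].
    + exists m0. apply HF, H0.
    + intros m Hm. symmetry. apply (Hact m), HF, Hm.
    + auto.
  - left. reflexivity.
Qed.

Lemma tft_peq_common_left U M1 V1 M2 V2 :
  In U M1 -> In V1 M1 -> In U M2 -> In V2 M2 ->
  peq (tft z mul U M1 V1) (tft z mul U M2 V2) -> pnonzero (tft z mul U M1 V1) ->
  (forall m, FL z mul M1 m <-> FL z mul M2 m) /\
  (V1 = V2
   \/ ((exists e, V1 = Some e /\ mul e e = e) /\ pge (theta z mul V1) (fL z mul M1) /\
       V2 = None)
   \/ ((exists e, V2 = Some e /\ mul e e = e) /\ pge (theta z mul V2) (fL z mul M2) /\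
       V1 = None)).
Proof.
  intros HU1 HV1 HU2 HV2 Heq [p [q Hpq]].
  pose proof (tft_peq_same_left HU1 HV1 HU2 HV2 Heq) as S12.
  pose proof (tft_peq_same_left HU2 HV2 HU1 HV1 (peq_sym Heq)) as S21.
  assert (HF : forall m, FL z mul M1 m <-> FL z mul M2 m)
    by (intro m; split; intro Hm; [apply S12 | apply S21]; exact Hm).
  split; [exact HF |].
  apply (tft_iff p q HU1 HV1) in Hpq. destruct Hpq as [m0 [Hm0 _]].
  apply right_factor_cases; eauto. intros m Hm. apply (S12 m Hm).
Qed.

End ZeroSemigroup.

Theorem theorem7p21 (T : Type) (z : T) (mul : T -> T -> T)
  (HS : is_semigroup_with_zero z mul)
  (Hcanc : zero_cancellative z mul)
  (Hlcm : admits_lcm mul)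
  (L1 L2 : list (option T)) (u1 v1 u2 v2 : option T)
  (HL1 : exists s, In (Some s) L1) (HL2 : exists s, In (Some s) L2)
  (Hu1 : In u1 L1) (Hv1 : In v1 L1) (Hu2 : In u2 L2) (Hv2 : In v2 L2)
  (Heq : peq (tft z mul u1 L1 v1) (tft z mul u2 L2 v2))
  (Hnz : pnonzero (tft z mul u1 L1 v1)) :
  exists x1 x2 : option T,
    peq (tft z mul u1 L1 v1)
        (tft z mul (tmul mul u1 x1) (Lmul mul L1 x1) (tmul mul v1 x1)) /\
    peq (tft z mul u2 L2 v2)
        (tft z mul (tmul mul u2 x2) (Lmul mul L2 x2) (tmul mul v2 x2)) /\
    tmul mul u1 x1 = tmul mul u2 x2 /\
    (forall x, FL z mul (Lmul mul L1 x1) x <-> FL z mul (Lmul mul L2 x2) x) /\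
    ( tmul mul v1 x1 = tmul mul v2 x2
    \/ ((exists e, tmul mul v1 x1 = Some e /\ mul e e = e) /\
        pge (theta z mul (tmul mul v1 x1)) (fL z mul (Lmul mul L1 x1)) /\
        v2 = None /\ x2 = None)
    \/ ((exists e, tmul mul v2 x2 = Some e /\ mul e e = e) /\
        pge (theta z mul (tmul mul v2 x2)) (fL z mul (Lmul mul L2 x2)) /\
        v1 = None /\ x1 = None) ).
Proof.
  destruct HL1 as [s1 Hs1], HL2 as [s2 Hs2].
  destruct (right_multiples_cover HS Hcanc Hlcm
              (tft_peq_left_cover Hu1 Hv1 Hu2 Hv2 Heq)
              (tft_peq_left_cover Hu2 Hv2 Hu1 Hv1 (peq_sym Heq)))
    as [x1 [x2 [Eu [C1 C2]]]].
  pose proof (tft_Lmul HS Hs1 Hu1 Hv1 C1) as P1.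
  pose proof (tft_Lmul HS Hs2 Hu2 Hv2 C2) as P2.
  assert (P : peq (tft z mul (tmul mul u1 x1) (Lmul mul L1 x1) (tmul mul v1 x1))
                  (tft z mul (tmul mul u1 x1) (Lmul mul L2 x2) (tmul mul v2 x2)))
    by (intros p q; rewrite <- (P1 p q), Eu, <- (P2 p q); apply Heq).
  assert (Hnz' : pnonzero (tft z mul (tmul mul u1 x1) (Lmul mul L1 x1) (tmul mul v1 x1)))
    by (destruct Hnz as [p [q H]]; exists p, q; apply P1, H).
  assert (HU2 := in_Lmul mul x2 Hu2). rewrite <- Eu in HU2.
  destruct (tft_peq_common_left HS Hcanc (in_Lmul mul x1 Hu1) (in_Lmul mul x1 Hv1)
              HU2 (in_Lmul mul x2 Hv2) P Hnz')
    as [HF [D | [[D1 [D2 D3]] | [D1 [D2 D3]]]]];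
    exists x1, x2; do 4 (split; [assumption |]).
  - left; exact D.
  - right; left. apply tmul_eq_None in D3. tauto.
  - right; right. apply tmul_eq_None in D3. tauto.
Qed.
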